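(* Let $R$ be a ring with identity and $a,b,c,y\in R$. (i) If $y$ is the annihilator $(b,c)$-inverse of $a$, then $y$ is both a right annihilator and a left annihilator $(b,c)$-inverse of $a$. (ii) If $y$ is both a left $(b,c)$-inverse and a left annihilator $(b,c)$-inverse of $a$, then $y$ is the annihilator $(b,c)$-inverse of $a$. (iii) If $y$ is both a right $(b,c)$-inverse and a right annihilator $(b,c)$-inverse of $a$, then $y$ is the annihilator $(b,c)$-inverse of $a$. Moreover, if $b$ and $c$ are regular, then the converses of (i), (ii) and (iii) all hold.
   Context: An element $x$ is regular if $x=xzx$ for some $z\in R$. For $x\in R$: $xR=\{xr:r\in R\}$, $Rx=\{rx:r\in R\}$, $x^\circ=\{r: xr=0\}$, ${}^\circ x=\{r: rx=0\}$. $y$ is the annihilator $(b,c)$-inverse of $a$ if $yay=y$, ${}^\circ b={}^\circ y$ and $y^\circ=c^\circ$. $y$ is a left $(b,c)$-inverse of $a$ if $Ry\subseteq Rc$ and $yab=b$; a right $(b,c)$-inverse if $yR\subseteq bR$ and $cay=c$; a right annihilator $(b,c)$-inverse if $c^\circ\subseteq y^\circ$ and $yab=b$; a left annihilator $(b,c)$-inverse if ${}^\circ b\subseteq {}^\circ y$ and $cay=c$. *)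

(* R is an arbitrary (possibly non-commutative) ring with 1
   (pzRingType: the zero ring is not excluded). *)
From mathcomp Require Import all_boot all_algebra.
Set Implicit Arguments. Unset Strict Implicit. Unset Printing Implicit Defensive.
Import GRing.Theory.
Local Open Scope ring_scope.

Section BCInverses.
Variable R : pzRingType.

Definition regular (x : R) : Prop := exists z : R, x = x * z * x.

Definition rideal (x : R) : R -> Prop := fun t => exists r, t = x * r.
Definition lideal (x : R) : R -> Prop := fun t => exists r, t = r * x.
Definition rann (x : R) : R -> Prop := fun r => x * r = 0.
Definition lann (x : R) : R -> Prop := fun r => r * x = 0.

Definition subsetP (A B : R -> Prop) : Prop := forall t, A t -> B t.
Definition eqsetP (A B : R -> Prop) : Prop := forall t, A t <-> B t.

Definition ann_bc_inverse (a b c y : R) : Prop :=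
  y * a * y = y /\ eqsetP (lann b) (lann y) /\ eqsetP (rann y) (rann c).

Definition left_bc_inverse (a b c y : R) : Prop :=
  subsetP (lideal y) (lideal c) /\ y * a * b = b.

Definition right_bc_inverse (a b c y : R) : Prop :=
  subsetP (rideal y) (rideal b) /\ c * a * y = c.

Definition right_ann_bc_inverse (a b c y : R) : Prop :=
  subsetP (rann c) (rann y) /\ y * a * b = b.

Definition left_ann_bc_inverse (a b c y : R) : Prop :=
  subsetP (lann b) (lann y) /\ c * a * y = c.

End BCInverses.

From mathcomp Require Import all_boot all_algebra.
Import GRing.Theory.
Local Open Scope ring_scope.

(* An equation y a b = b (resp. c a y = c)
   turns a relation t y = 0 into t b = 0 (resp. y t = 0 into c t = 0), and
   conversely, once y a y = y, the element 1 - y a (resp. 1 - a y) annihilates y,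
   so an inclusion of annihilators yields y a b = b (resp. c a y = c). Ideal
   inclusions give the reverse annihilator inclusions, and regularity of c
   (resp. b) turns them back into ideal inclusions, because 1 - z c (resp. 1 - b w)
   annihilates c (resp. b). *)

Section BCInverseTheory.
Variable R : pzRingType.
Variables a b c y : R.

Lemma lann_subset_of_mul_id :
  y * a * b = b -> subsetP (lann y) (lann b).
Proof. by move=> yab t ty; rewrite /lann -yab !mulrA ty !mul0r. Qed.

Lemma rann_subset_of_mul_id :
  c * a * y = c -> subsetP (rann y) (rann c).
Proof. by move=> cay t yt; rewrite /rann -cay -mulrA yt mulr0. Qed.

Lemma mul_id_of_lann_subset :
  y * a * y = y -> subsetP (lann y) (lann b) -> y * a * b = b.
Proof.
move=> yay sub; apply/esym/eqP; rewrite -subr_eq0 -{1}[b]mul1r -mulrBl.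
by apply/eqP/sub; rewrite /lann mulrBl mul1r yay subrr.
Qed.

Lemma mul_id_of_rann_subset :
  y * a * y = y -> subsetP (rann y) (rann c) -> c * a * y = c.
Proof.
move=> yay sub; apply/esym/eqP; rewrite -subr_eq0 -{1}[c]mulr1 -mulrA -mulrBr.
by apply/eqP/sub; rewrite /rann mulrBr mulr1 mulrA yay subrr.
Qed.

Lemma rann_subset_of_lideal :
  subsetP (lideal y) (lideal c) -> subsetP (rann c) (rann y).
Proof.
move=> sub t ct; have [r yrc] := sub y (ex_intro _ 1 (esym (mul1r y))).
by rewrite /rann yrc -mulrA ct mulr0.
Qed.

Lemma lann_subset_of_rideal :
  subsetP (rideal y) (rideal b) -> subsetP (lann b) (lann y).
Proof.
move=> sub t tb; have [s ybs] := sub y (ex_intro _ 1 (esym (mulr1 y))).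
by rewrite /lann ybs mulrA tb mul0r.
Qed.

Lemma lideal_subset_of_rann :
  regular c -> subsetP (rann c) (rann y) -> subsetP (lideal y) (lideal c).
Proof.
move=> [z czc] sub _ [r ->]; exists (r * y * z).
have /eqP : y * (1 - z * c) = 0.
  by apply: sub; rewrite /rann mulrBr mulr1 mulrA -czc subrr.
by rewrite mulrBr mulr1 subr_eq0 => /eqP {1}->; rewrite !mulrA.
Qed.

Lemma rideal_subset_of_lann :
  regular b -> subsetP (lann b) (lann y) -> subsetP (rideal y) (rideal b).
Proof.
move=> [w bwb] sub _ [r ->]; exists (w * y * r).
have /eqP : (1 - b * w) * y = 0.
  by apply: sub; rewrite /lann mulrBl mul1r -bwb subrr.
by rewrite mulrBl mul1r subr_eq0 => /eqP {1}->; rewrite !mulrA.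
Qed.

Lemma outer_inverse_of_lideal :
  subsetP (lideal y) (lideal c) -> c * a * y = c -> y * a * y = y.
Proof.
move=> sub cay; have [r yrc] := sub y (ex_intro _ 1 (esym (mul1r y))).
by rewrite {1}yrc -!mulrA (mulrA c a) cay -yrc.
Qed.

Lemma outer_inverse_of_rideal :
  subsetP (rideal y) (rideal b) -> y * a * b = b -> y * a * y = y.
Proof.
move=> sub yab; have [s ybs] := sub y (ex_intro _ 1 (esym (mulr1 y))).
by rewrite {2}ybs mulrA yab -ybs.
Qed.

Lemma ann_bc_inverse_of_outer :
  y * a * y = y -> right_ann_bc_inverse a b c y -> left_ann_bc_inverse a b c y ->
  ann_bc_inverse a b c y.
Proof.
move=> yay [csub yab] [bsub cay]; split=> //; split=> t; split.
- exact: bsub.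
- exact: lann_subset_of_mul_id yab t.
- exact: rann_subset_of_mul_id cay t.
- exact: csub.
Qed.

Lemma ann_bc_inverse_sides :
  ann_bc_inverse a b c y ->
  right_ann_bc_inverse a b c y /\ left_ann_bc_inverse a b c y.
Proof.
move=> [yay [eqb eqc]]; split; split.
- by move=> t /(eqc t).2.
- by apply: mul_id_of_lann_subset => // t /(eqb t).2.
- by move=> t /(eqb t).1.
- by apply: mul_id_of_rann_subset => // t /(eqc t).1.
Qed.

Lemma ann_bc_inverse_of_left :
  left_bc_inverse a b c y -> left_ann_bc_inverse a b c y -> ann_bc_inverse a b c y.
Proof.
move=> [sub yab] [bsub cay]; apply: ann_bc_inverse_of_outer => //.
- exact: outer_inverse_of_lideal sub cay.
- by split=> //; apply: rann_subset_of_lideal.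
Qed.

Lemma ann_bc_inverse_of_right :
  right_bc_inverse a b c y -> right_ann_bc_inverse a b c y -> ann_bc_inverse a b c y.
Proof.
move=> [sub cay] [csub yab]; apply: ann_bc_inverse_of_outer => //.
- exact: outer_inverse_of_rideal sub yab.
- by split=> //; apply: lann_subset_of_rideal.
Qed.

Lemma ann_bc_inverse_of_sides : regular c ->
  right_ann_bc_inverse a b c y -> left_ann_bc_inverse a b c y ->
  ann_bc_inverse a b c y.
Proof.
move=> regc [csub yab] [bsub cay]; apply: ann_bc_inverse_of_outer => //.
exact: outer_inverse_of_lideal (lideal_subset_of_rann regc csub) cay.
Qed.

Lemma left_bc_inverse_of_ann : regular c ->
  ann_bc_inverse a b c y -> left_bc_inverse a b c y /\ left_ann_bc_inverse a b c y.
Proof.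
move=> regc /ann_bc_inverse_sides [[csub yab] lann_inv]; split=> //.
by split=> //; apply: lideal_subset_of_rann.
Qed.

Lemma right_bc_inverse_of_ann : regular b ->
  ann_bc_inverse a b c y -> right_bc_inverse a b c y /\ right_ann_bc_inverse a b c y.
Proof.
move=> regb /ann_bc_inverse_sides [rann_inv [bsub cay]]; split=> //.
by split=> //; apply: rideal_subset_of_lann.
Qed.

End BCInverseTheory.

Theorem proposition2p11 (R : pzRingType) (a b c y : R) :
  (* (i) *)
  (ann_bc_inverse a b c y ->
     right_ann_bc_inverse a b c y /\ left_ann_bc_inverse a b c y) /\
  (* (ii) *)
  (left_bc_inverse a b c y /\ left_ann_bc_inverse a b c y ->
     ann_bc_inverse a b c y) /\
  (* (iii) *)
  (right_bc_inverse a b c y /\ right_ann_bc_inverse a b c y ->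
     ann_bc_inverse a b c y) /\
  (* converses when b and c are regular *)
  (regular b -> regular c ->
     (right_ann_bc_inverse a b c y /\ left_ann_bc_inverse a b c y ->
        ann_bc_inverse a b c y) /\
     (ann_bc_inverse a b c y ->
        left_bc_inverse a b c y /\ left_ann_bc_inverse a b c y) /\
     (ann_bc_inverse a b c y ->
        right_bc_inverse a b c y /\ right_ann_bc_inverse a b c y)).
Proof.
split; first exact: ann_bc_inverse_sides.
split; first by case; apply: ann_bc_inverse_of_left.
split; first by case; apply: ann_bc_inverse_of_right.
move=> regb regc; split; first by case; apply: ann_bc_inverse_of_sides.
split; [exact: left_bc_inverse_of_ann | exact: right_bc_inverse_of_ann].
Qed.
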